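(* For every positive integer $n$ and every $T\in\mathrm{TSPP}_{n-1}$, the partition $\pi(T)$ is a modified balanced partition of size $n$.
   Context: For a partition $\lambda$ with conjugate $\lambda'$ and Durfee square side $l=\max\{i:\lambda_i\ge i\}$, its Frobenius notation is $(\lambda_1-1,\ldots,\lambda_l-l\mid \lambda'_1-1,\ldots,\lambda'_l-l)$. A modified balanced partition of size $n$ is a partition $\lambda=(\lambda_1,\ldots,\lambda_n)$ with $n$ parts, zero parts allowed, such that $\lambda_1\le n-1$ and $\lambda_i<\lambda'_i$ whenever $\lambda_i\ge i$. A plane partition inside an $(m,m,m)$-box is an array $(T_{i,j})_{1\le i,j\le m}$ of integers in $\{0,\ldots,m\}$ weakly decreasing along rows and columns; equivalently the set $\{(i,j,k):k\le T_{i,j}\}\subseteq\{1,\ldots,m\}^3$. It is totally symmetric if this set is invariant under all permutations of coordinates; $\mathrm{TSPP}_m$ denotes the set of these. For $T\in\mathrm{TSPP}_{n-1}$, $\mathrm{diag}(T)$ is the conjugate of the partition $(T_{1,1},\ldots,T_{n-1,n-1})$; if $\mathrm{diag}(T)=(a_1,\ldots,a_l\mid b_1,\ldots,b_l)$ then $\pi(T)$ is the partition with Frobenius notation $(a_1,\ldots,a_l\mid b_1+1,\ldots,b_l+1)$. *)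

From mathcomp Require Import all_boot.
Set Implicit Arguments. Unset Strict Implicit. Unset Printing Implicit Defensive.

(* Partitions are represented by weakly decreasing sequences of naturals
   (zero parts allowed); parts are 1-indexed: part s i = lambda_i. *)
Definition part (s : seq nat) (i : nat) : nat := nth 0 s i.-1.

Definition conjp (s : seq nat) (j : nat) : nat := count (fun x => j <= x) s.

Definition is_partition (s : seq nat) : bool := sorted geq s.

Definition conj_part (s : seq nat) : seq nat :=
  mkseq (fun j => conjp s j.+1) (part s 1).

Definition durfee (s : seq nat) : nat :=
  foldr maxn 0 [seq (if i <= part s i then i else 0) | i <- iota 1 (size s)].

Definition frob_a (s : seq nat) : seq nat :=
  [seq part s i - i | i <- iota 1 (durfee s)].
Definition frob_b (s : seq nat) : seq nat :=
  [seq conjp s i - i | i <- iota 1 (durfee s)].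

Definition of_frob (a b : seq nat) : seq nat :=
  let l := size a in
  mkseq (fun i0 => if i0.+1 <= l then nth 0 a i0 + i0.+1
                   else count (fun j => i0.+1 <= nth 0 b j + j.+1) (iota 0 l))
        (if l == 0 then 0 else (nth 0 b 0).+1).

(* Plane partition in an (m,m,m)-box: T : 'I_m -> 'I_m -> nat (0-indexed
   positions), entries in {0..m}, weakly decreasing along rows and columns. *)
Definition is_pp_box (m : nat) (T : 'I_m -> 'I_m -> nat) : Prop :=
  (forall i j, T i j <= m) /\
  (forall i j j' : 'I_m, j <= j' -> T i j' <= T i j) /\
  (forall i i' j : 'I_m, i <= i' -> T i' j <= T i j).

(* the associated set {(i,j,k) : k <= T i j} in {1..m}^3, 0-indexed:
   (i,j,k) in the set iff k.+1 <= T i j *)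
Definition cell_in (m : nat) (T : 'I_m -> 'I_m -> nat) (i j k : 'I_m) : bool :=
  k < T i j.

Definition is_tspp (m : nat) (T : 'I_m -> 'I_m -> nat) : Prop :=
  is_pp_box T /\
  forall i j k : 'I_m,
    [/\ cell_in T i j k = cell_in T j i k,
        cell_in T i j k = cell_in T i k j,
        cell_in T i j k = cell_in T k j i,
        cell_in T i j k = cell_in T j k i &
        cell_in T i j k = cell_in T k i j].

Definition diagT (m : nat) (T : 'I_m -> 'I_m -> nat) : seq nat :=
  conj_part [seq T i i | i <- enum 'I_m].

Definition piT (m : nat) (T : 'I_m -> 'I_m -> nat) : seq nat :=
  let d := diagT T in of_frob (frob_a d) [seq x.+1 | x <- frob_b d].

(* modified balanced partition of size n: a partition with at most n nonzero
   parts (i.e. n parts, zeros allowed), lambda_1 <= n-1, and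
   lambda_i < lambda'_i whenever lambda_i >= i. *)
Definition is_mbp (n : nat) (s : seq nat) : bool :=
  [&& is_partition s,
      count (fun x => 0 < x) s <= n,
      part s 1 <= n.-1 &
      [forall i : 'I_n, (i.+1 <= part s i.+1) ==> (part s i.+1 < conjp s i.+1)]].

From mathcomp Require Import all_boot.

Set Implicit Arguments.
Unset Strict Implicit.
Unset Printing Implicit Defensive.

(* For T in TSPP_(n-1) let D = (T_11, ..., T_mm), m = n - 1, be its diagonal,
   d = diag(T) the conjugate of D, and pi(T) the partition with Frobenius
   notation (a | b + 1) where (a | b) is the Frobenius notation of d.
   Concretely pi(T) agrees with d on the rows of the Durfee square, while the
   part of d below the square is shifted down by one row. *)

Lemma geq_trans : transitive geq.
Proof. by move=> a b c h1 h2; apply: leq_trans h2 h1. Qed.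

Lemma nth_geq_sorted (s : seq nat) i j :
  sorted geq s -> i <= j -> nth 0 s j <= nth 0 s i.
Proof.
move=> s_sorted le_ij; have [lt_js|le_sj] := ltnP j (size s); last first.
  by rewrite nth_default.
exact: (sorted_leq_nth geq_trans leqnn 0 s_sorted) (leq_ltn_trans le_ij lt_js) lt_js le_ij.
Qed.

Lemma part_geq_sorted (s : seq nat) i j :
  sorted geq s -> i <= j -> part s j <= part s i.
Proof. by move=> s_sorted le_ij; apply: nth_geq_sorted; rewrite // -!subn1 leq_sub2r. Qed.

Lemma size_nth_gt0 (s : seq nat) j : 0 < nth 0 s j -> j < size s.
Proof. by move=> nth_gt0; rewrite ltnNge; apply: contraL nth_gt0 => /(nth_default 0) ->. Qed.

(* Duality between a partition and its conjugate, 0-indexed on the left: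
   the parts >= k form a prefix of length lambda'_k. *)
Lemma conjp_gtE (s : seq nat) j k :
  sorted geq s -> 0 < k -> (j < conjp s k) = (k <= nth 0 s j).
Proof.
move=> + k_gt0; rewrite /conjp; elim: s j => [|x s IHs] j s_sorted /=.
  by rewrite nth_nil ltn0 leqn0 (gtn_eqF k_gt0).
have below_x : all (geq x) s := order_path_min geq_trans s_sorted.
have [le_kx|lt_xk] := leqP k x.
  by case: j => [|j] //=; rewrite add1n ltnS IHs ?(path_sorted s_sorted).
have -> : count (fun y => k <= y) s = 0.
  apply/eqP; rewrite -leqn0 leqNgt -has_count; apply/hasPn => y /(allP below_x) le_yx.
  by rewrite -ltnNge (leq_ltn_trans le_yx).
apply/esym/negbTE; rewrite -ltnNge; case: j => [|j] //=.
have [->|/size_nth_gt0 lt_js] := posnP (nth 0 s j); first exact: k_gt0.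
by apply: leq_ltn_trans lt_xk; apply: (allP below_x); rewrite mem_nth.
Qed.

(* The Durfee side l is the largest i with lambda_i >= i, and the set of such
   i is an initial segment since i - lambda_i increases. *)
Lemma durfeeP (s : seq nat) i :
  sorted geq s -> 0 < i -> (i <= durfee s) = (i <= part s i).
Proof.
move=> s_sorted i_gt0; rewrite /durfee foldrE big_map.
apply/idP/idP => [|le_i_si]; last first.
  apply: (bigmaxn_sup_seq i) => //; last by rewrite le_i_si.
  rewrite mem_iota i_gt0 add1n -{1}(prednK i_gt0) ltnS /=.
  by apply: size_nth_gt0; apply: leq_trans le_i_si.
apply: contraLR; rewrite -!ltnNge => lt_si_i.
rewrite -(prednK i_gt0) ltnS; apply/bigmax_leqP_seq => j _ _.
case: ifP => [le_j_sj|_]; last exact: leq0n.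
rewrite -ltnS prednK //; have [//|le_ij] := ltnP j i.
have : part s j < j by apply: leq_ltn_trans (part_geq_sorted s_sorted le_ij) (leq_trans lt_si_i le_ij).
by rewrite ltnNge le_j_sj.
Qed.

Lemma conjp_geE (s : seq nat) j k :
  sorted geq s -> 0 < j -> 0 < k -> (j <= conjp s k) = (k <= part s j).
Proof. by move=> s_sorted j_gt0 k_gt0; rewrite -(prednK j_gt0) conjp_gtE. Qed.

Lemma conjp_antitone (s : seq nat) a b : a <= b -> conjp s b <= conjp s a.
Proof. by move=> le_ab; apply: sub_count => x /= /(leq_trans le_ab). Qed.

Lemma part_conj_part (s : seq nat) j :
  sorted geq s -> 0 < j -> part (conj_part s) j = conjp s j.
Proof.
move=> s_sorted j_gt0; rewrite /conj_part /part.
have [lt_j_s1|le_s1_j] := ltnP j.-1 (part s 1); first by rewrite nth_mkseq // prednK.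
rewrite nth_default ?size_mkseq //; apply/esym/eqP; rewrite -leqn0 leqNgt.
by rewrite conjp_gtE // -ltnNge -(prednK j_gt0) ltnS.
Qed.

Lemma conj_part_sorted (s : seq nat) : sorted geq (conj_part s).
Proof.
apply/(sortedP 0) => i; rewrite size_mkseq => lt_i1.
by rewrite /= !nth_mkseq ?(ltnW lt_i1) //; apply: conjp_antitone.
Qed.

Definition frob_shift (d : seq nat) : seq nat :=
  of_frob (frob_a d) [seq x.+1 | x <- frob_b d].

Section FrobeniusShift.

Variable d : seq nat.
Hypothesis d_sorted : sorted geq d.

Local Notation l := (durfee d).
Local Notation lam := (frob_shift d).

Lemma durfee_le_conjp k : 0 < k -> k <= l -> k <= conjp d k.
Proof. by move=> k_gt0; rewrite durfeeP // conjp_geE. Qed.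

Lemma durfee_le_part : 0 < l -> l <= part d l.
Proof. by move=> l_gt0; rewrite -durfeeP. Qed.

Lemma durfee_le_conjp1 : l <= conjp d 1.
Proof.
have [->//|l_gt0] := posnP l.
exact: leq_trans (durfee_le_conjp l_gt0 (leqnn l)) (conjp_antitone _ l_gt0).
Qed.

Lemma size_frob_shift : size lam = if l == 0 then 0 else (conjp d 1).+1.
Proof.
rewrite /frob_shift /of_frob size_mkseq /frob_a size_map size_iota.
have [//|l_gt0] := posnP l.
rewrite /frob_b (nth_map 0) ?size_map ?size_iota // (nth_map 0) ?size_iota //.
by rewrite nth_iota // subn1 prednK // durfee_le_conjp.
Qed.

Lemma nth_frob_shift i : i < size lam ->
  nth 0 lam i = if i < l then nth 0 (frob_a d) i + i.+1
                else count (fun j => i < nth 0 [seq x.+1 | x <- frob_b d] j + j.+1)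
                           (iota 0 l).
Proof.
rewrite /frob_shift /of_frob size_mkseq => lt_i_size.
by rewrite nth_mkseq // /frob_a size_map size_iota.
Qed.

Lemma frob_shift_lo i : i < l -> nth 0 lam i = part d i.+1.
Proof.
move=> lt_il; have lt_i_size : i < size lam.
  rewrite size_frob_shift gtn_eqF ?(leq_ltn_trans _ lt_il) //.
  exact: leq_trans lt_il (leq_trans durfee_le_conjp1 (leqnSn _)).
rewrite nth_frob_shift // lt_il /frob_a (nth_map 0) ?size_iota // nth_iota //.
by rewrite add1n subnK // -durfeeP.
Qed.

(* Row i + 1 below the square counts the columns j <= l with d'_j >= i,
   i.e. it is row i of d: the lower part is shifted down by one. *)
Lemma frob_shift_hi i : l <= i -> i < size lam ->
  nth 0 lam i = count (fun j => i <= conjp d j.+1) (iota 0 l).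
Proof.
move=> le_li lt_i_size; rewrite nth_frob_shift // ltnNge le_li /=.
apply: eq_in_count => j; rewrite mem_iota add0n /= => lt_jl.
rewrite /frob_b (nth_map 0) ?size_map ?size_iota // (nth_map 0) ?size_iota //.
by rewrite nth_iota // add1n addSn subnK ?ltnS // durfee_le_conjp.
Qed.

Lemma frob_shift_hi_le i : l <= i -> nth 0 lam i <= l.
Proof.
move=> le_li; have [lt_i_size|le_size_i] := ltnP i (size lam); last first.
  by rewrite nth_default.
by rewrite frob_shift_hi //; apply: leq_trans (count_size _ _) _; rewrite size_iota.
Qed.

Lemma frob_shift_sorted : sorted geq lam.
Proof.
apply/(sortedP 0) => i lt_i1_size /=.
have [lt_i1_l|le_l_i1] := ltnP i.+1 l.
  by rewrite !frob_shift_lo ?(ltnW lt_i1_l) //; apply: part_geq_sorted.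
have [lt_il|le_li] := ltnP i l.
  apply: leq_trans (frob_shift_hi_le le_l_i1) _.
  by rewrite frob_shift_lo //; apply: leq_trans (durfee_le_part (leq_ltn_trans (leq0n i) lt_il)) (part_geq_sorted d_sorted lt_il).
rewrite !frob_shift_hi ?(ltnW lt_i1_size) //.
by apply: sub_count => j /= /ltnW.
Qed.

Hypothesis d_balanced : forall k, 0 < k -> k <= l -> part d k <= conjp d k.

(* The defining inequality of balanced partitions: a row i reaching the
   diagonal is strictly shorter than column i, thanks to the shift. *)
Lemma frob_shift_balanced i : 0 < i -> i <= part lam i -> part lam i < conjp lam i.
Proof.
case: i => // i _ le_i1_lam.
have lt_il : i < l.
  rewrite ltnNge; apply: contraTN le_i1_lam => le_li.
  by rewrite -ltnNge ltnS (leq_trans (frob_shift_hi_le le_li) le_li).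
have l_gt0 : 0 < l := leq_ltn_trans (leq0n i) lt_il.
rewrite /part /= frob_shift_lo // in le_i1_lam *; set c := part d i.+1 in le_i1_lam *.
have le_c_conj : c <= conjp d i.+1 := d_balanced (ltn0Sn i) lt_il.
rewrite conjp_gtE ?frob_shift_sorted //.
have [lt_cl|le_lc] := ltnP c l.
  rewrite frob_shift_lo //; apply: leq_trans lt_il _.
  exact: leq_trans (durfee_le_part l_gt0) (part_geq_sorted d_sorted lt_cl).
have lt_c_size : c < size lam.
  by rewrite size_frob_shift gtn_eqF // ltnS (leq_trans le_c_conj (conjp_antitone _ _)).
rewrite frob_shift_hi // -(subnKC lt_il) iotaD count_cat; apply: leq_trans (leq_addr _ _).
rewrite (eq_in_count (a2 := predT)) ?count_predT ?size_iota // => j.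
by rewrite mem_iota => /= lt_j_i1; apply: leq_trans le_c_conj (conjp_antitone _ _).
Qed.

(* If d fits in an (n-1) x (n-1) box, its shift is modified balanced of
   size n: it has at most d'_1 + 1 <= n rows and first row d_1 <= n - 1. *)
Lemma frob_shift_mbp n : size d < n -> part d 1 < n -> is_mbp n lam.
Proof.
move=> lt_size_n lt_d1_n; apply/and4P; split.
- exact: frob_shift_sorted.
- apply: leq_trans (count_size _ _) _; rewrite size_frob_shift; case: eqP => // _.
  exact: leq_ltn_trans (count_size _ _) lt_size_n.
- rewrite -ltnS (ltn_predK lt_d1_n); apply: leq_ltn_trans lt_d1_n.
  have [l_eq0|l_gt0] := posnP l; last by rewrite /part /= frob_shift_lo.
  by rewrite /part nth_default // size_frob_shift l_eq0.
- apply/forallP => i; apply/implyP; exact: frob_shift_balanced.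
Qed.

End FrobeniusShift.

(* A partition D with the symmetry of a TSPP diagonal has a conjugate
   satisfying the balance hypothesis of [frob_shift_balanced]: with
   c = D'_k >= k, both c <= d'_k and k <= D_c reduce to c <= D_k. *)
Lemma conj_part_balanced (D : seq nat) :
  sorted geq D ->
  (forall k c, 0 < k -> k <= c -> k <= part D c -> c <= part D k) ->
  forall k, 0 < k -> k <= durfee (conj_part D) ->
  part (conj_part D) k <= conjp (conj_part D) k.
Proof.
move=> D_sorted D_sym k k_gt0 le_k_l; have d_sorted := conj_part_sorted D.
have le_k_dk : k <= part (conj_part D) k by rewrite -durfeeP.
rewrite part_conj_part // in le_k_dk *; set c := conjp D k in le_k_dk *.
have c_gt0 : 0 < c := leq_trans k_gt0 le_k_dk.
rewrite conjp_geE // part_conj_part // conjp_geE //.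
by apply: D_sym => //; rewrite -conjp_geE.
Qed.

Section TotallySymmetric.

Variables (m : nat) (T : 'I_m -> 'I_m -> nat).

Local Notation D := [seq T i i | i <- enum 'I_m].

Lemma size_diag : size D = m.
Proof. by rewrite size_map size_enum_ord. Qed.

Lemma nth_diag (i : 'I_m) : nth 0 D i = T i i.
Proof. by rewrite (nth_map i) ?size_enum_ord // nth_ord_enum. Qed.

Lemma diag_sorted : is_pp_box T -> sorted geq D.
Proof.
case=> _ [T_row T_col]; apply/(sortedP 0) => i; rewrite size_diag => lt_i1_m /=.
pose i0 := Ordinal (ltnW lt_i1_m); pose i1 := Ordinal lt_i1_m.
rewrite -[i]/(nat_of_ord i0) -[i.+1]/(nat_of_ord i1) !nth_diag.
exact: leq_trans (T_col i0 i1 i1 (leqnSn i)) (T_row i0 i0 i1 (leqnSn i)).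
Qed.

Lemma diag_head_bounded : is_pp_box T -> part D 1 <= m.
Proof.
case=> T_le _; rewrite /part /=; have [m0|lt0m] := posnP m.
  by rewrite nth_default // size_diag m0.
by rewrite -[0]/(nat_of_ord (Ordinal lt0m)) nth_diag; apply: T_le.
Qed.

(* Total symmetry on the diagonal: if k <= c and k <= T_cc, then the cell
   (c, c, k) is in T, hence so is (k, c, c), so c <= T_kc <= T_kk. *)
Lemma diag_symmetric : is_tspp T ->
  forall k c, 0 < k -> k <= c -> k <= part D c -> c <= part D k.
Proof.
case=> [[_ [T_row _]] T_sym] k c k_gt0 le_kc le_k_Dc.
have c_gt0 : 0 < c := leq_trans k_gt0 le_kc.
have le_k1_c1 : k.-1 <= c.-1 by rewrite -!subn1 leq_sub2r.
have lt_c1_m : c.-1 < m by rewrite -size_diag size_nth_gt0 // (leq_trans k_gt0).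
pose c0 := Ordinal lt_c1_m; pose k0 := Ordinal (leq_ltn_trans le_k1_c1 lt_c1_m).
have [_ _ sym_ck _ _] := T_sym c0 c0 k0.
move: le_k_Dc sym_ck; rewrite /part -[c.-1]/(nat_of_ord c0) -[k.-1]/(nat_of_ord k0) !nth_diag.
rewrite /cell_in /= (prednK k_gt0) => -> /esym; rewrite (prednK c_gt0) => le_c_Tkc.
exact: leq_trans le_c_Tkc (T_row k0 k0 c0 le_k1_c1).
Qed.

End TotallySymmetric.

Theorem mainTheorem6 (n : nat) (T : 'I_n.-1 -> 'I_n.-1 -> nat) :
  0 < n -> is_tspp T -> is_mbp n (piT T).
Proof.
move=> n_gt0 T_tspp; have T_box : is_pp_box T := proj1 T_tspp.
set D := [seq T i i | i <- enum 'I_n.-1].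
have D_sorted : sorted geq D := diag_sorted T_box.
have lt_m_n : n.-1 < n by rewrite ltn_predL.
apply: frob_shift_mbp.
- exact: conj_part_sorted.
- exact: conj_part_balanced D_sorted (diag_symmetric T_tspp).
- by rewrite size_mkseq (leq_ltn_trans (diag_head_bounded T_box)).
- by rewrite part_conj_part // (leq_ltn_trans (count_size _ _)) // size_diag.
Qed.
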